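(* Let $k>1$, let $f$ be a positive function, differentiable on $[0,1]$, and define $g(R)=\dfrac{k-1}{\frac{k-1}{k}-R}$ for $R\neq\frac{k-1}{k}$. Consider the planar system $$\frac{dI}{d\tau}=I\,[f(R)(1-I-R)-k],\qquad \frac{dR}{d\tau}=(k-1)I-R,$$ and let $(I^*,R^* )$ be an endemic equilibrium point of it. If $$\frac{df}{dR}(R^* )<\frac{dg}{dR}(R^* )\quad\left(\text{equivalently } <\tfrac{1}{k-1}g^2(R^* ),\ \text{equivalently } <\tfrac{1}{k-1}f^2(R^* )\right),$$ then $(I^*,R^* )$ is a locally stable equilibrium point. If $$\frac{df}{dR}(R^* )>\frac{dg}{dR}(R^* )\quad\left(\text{equivalently } >\tfrac{1}{k-1}g^2(R^* ),\ \text{equivalently } >\tfrac{1}{k-1}f^2(R^* )\right),$$ then $(I^*,R^* )$ is a local saddle point.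
   Context: An endemic equilibrium is an equilibrium point $(I^*,R^* )$ of the system with $I^*>0$. ''Locally stable'' means locally asymptotically stable (both eigenvalues of the Jacobian at the point have negative real part); ''saddle'' means the Jacobian at the point has one positive and one negative real eigenvalue. *)

From Stdlib Require Import Reals.
From Coquelicot Require Import Coquelicot.
Open Scope R_scope.

Definition F1 (f : R -> R) (k I Rv : R) : R := I * (f Rv * (1 - I - Rv) - k).
Definition F2 (k I Rv : R) : R := (k - 1) * I - Rv.

Definition g (k Rv : R) : R := (k - 1) / ((k - 1) / k - Rv).

Definition is_equilibrium (f : R -> R) (k I Rv : R) : Prop :=
  F1 f k I Rv = 0 /\ F2 k I Rv = 0.
Definition is_endemic_equilibrium (f : R -> R) (k I Rv : R) : Prop :=
  is_equilibrium f k I Rv /\ 0 < I.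

Definition jac11 f k I Rv : R := Derive (fun x => F1 f k x Rv) I.
Definition jac12 f k I Rv : R := Derive (fun y => F1 f k I y) Rv.
Definition jac21 k I Rv : R := Derive (fun x => F2 k x Rv) I.
Definition jac22 k I Rv : R := Derive (fun y => F2 k I y) Rv.

Definition is_jac_eigenvalue (f : R -> R) (k I Rv : R) (l : C) : Prop :=
  ((RtoC (jac11 f k I Rv) - l) * (RtoC (jac22 k I Rv) - l)
  - RtoC (jac12 f k I Rv) * RtoC (jac21 k I Rv) = 0)%C.

Definition locally_stable (f : R -> R) (k I Rv : R) : Prop :=
  forall l : C, is_jac_eigenvalue f k I Rv l -> Re l < 0.

Definition saddle (f : R -> R) (k I Rv : R) : Prop :=
  exists l1 l2 : C,
    is_jac_eigenvalue f k I Rv l1 /\ is_jac_eigenvalue f k I Rv l2 /\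
    Im l1 = 0 /\ Im l2 = 0 /\ 0 < Re l1 /\ Re l2 < 0.

(* At an endemic equilibrium (I, R) the relations R = (k-1) I and f(R) (1 - I - R) = k
   make the trace of the Jacobian equal to -I f(R) - 1 < 0 and its determinant equal
   to I (1 - I - R) (f(R)^2 - (k-1) f'(R)), while g'(R) = f(R)^2 / (k-1).
   Hence the sign of g'(R) - f'(R) is the sign of the determinant: with a negative
   trace, a positive determinant forces every eigenvalue into the left half-plane and a
   negative one gives two real eigenvalues of opposite signs. *)
From Stdlib Require Import Reals Lra Psatz.
From Coquelicot Require Import Coquelicot.
Open Scope R_scope.

Lemma char2_root_parts (a b c d : R) (l : C) :
  ((RtoC a - l) * (RtoC d - l) - RtoC b * RtoC c = 0)%C ->
  (a - Re l) * (d - Re l) - Im l * Im l - b * c = 0 /\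
  Im l * (a + d - 2 * Re l) = 0.
Proof.
  intros Hl; destruct l as [x y].
  pose proof f_equal fst Hl as Hre; pose proof f_equal snd Hl as Him.
  simpl in Hre, Him; unfold Re, Im; simpl; split; nra.
Qed.

Lemma char2_root_RtoC (a b c d x : R) :
  (a - x) * (d - x) - b * c = 0 ->
  ((RtoC a - RtoC x) * (RtoC d - RtoC x) - RtoC b * RtoC c = 0)%C.
Proof. intros H; apply injective_projections; simpl; nra. Qed.

Lemma char2_root_Re_lt0 (a b c d : R) (l : C) :
  a + d < 0 -> 0 < a * d - b * c ->
  ((RtoC a - l) * (RtoC d - l) - RtoC b * RtoC c = 0)%C -> Re l < 0.
Proof.
  intros Htr Hdet Hl.
  destruct (char2_root_parts _ _ _ _ _ Hl) as [Hre Him].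
  destruct (Req_dec (Im l) 0) as [Him0 | Him0].
  - rewrite Him0 in Hre.
    destruct (Rlt_le_dec (Re l) 0) as [|Hre_ge0]; [assumption|].
    assert (0 <= - (a + d) * Re l) by nra.
    nra.
  - assert (a + d - 2 * Re l = 0) as Hmid.
    { destruct (Rmult_integral _ _ Him); [contradiction | assumption]. }
    lra.
Qed.

Lemma char2_roots_opposite_signs (a b c d : R) :
  a * d - b * c < 0 ->
  exists l1 l2 : R,
    (a - l1) * (d - l1) - b * c = 0 /\ (a - l2) * (d - l2) - b * c = 0 /\
    0 < l1 /\ l2 < 0.
Proof.
  intros Hdet.
  set (T := a + d); set (Q := a * d - b * c) in Hdet.
  assert (Hdisc : 0 <= T * T - 4 * Q) by nra.
  set (s := sqrt (T * T - 4 * Q)).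
  assert (Hs2 : s * s = T * T - 4 * Q) by (apply sqrt_sqrt; exact Hdisc).
  assert (Hs0 : 0 <= s) by apply sqrt_pos.
  assert (T < s /\ - T < s) as [HTs HTs'] by (split; nra).
  exists ((T + s) / 2), ((T - s) / 2).
  unfold T, Q in *; repeat split; nra.
Qed.

Lemma jac11_eq (f : R -> R) (k I Rv : R) : jac11 f k I Rv = f Rv * (1 - 2 * I - Rv) - k.
Proof.
  unfold jac11, F1; erewrite is_derive_unique; [| auto_derive; auto]; ring.
Qed.

Lemma jac12_eq (f : R -> R) (k I Rv : R) :
  ex_derive f Rv -> jac12 f k I Rv = I * (Derive f Rv * (1 - I - Rv) - f Rv).
Proof.
  intros Hf; unfold jac12, F1; erewrite is_derive_unique; [| auto_derive; auto].
  change (Derive (fun x : R => f x) Rv) with (Derive f Rv); ring.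
Qed.

Lemma jac21_eq (k I Rv : R) : jac21 k I Rv = k - 1.
Proof. unfold jac21, F2; erewrite is_derive_unique; [| auto_derive; auto]; ring. Qed.

Lemma jac22_eq (k I Rv : R) : jac22 k I Rv = -1.
Proof. unfold jac22, F2; erewrite is_derive_unique; [| auto_derive; auto]; ring. Qed.

Lemma Derive_g (k Rv : R) :
  (k - 1) / k - Rv <> 0 -> Derive (g k) Rv = (k - 1) / ((k - 1) / k - Rv) ^ 2.
Proof.
  intros HD; unfold g; set (c := (k - 1) / k) in *; erewrite is_derive_unique.
  2: { auto_derive; [unfold Rminus in HD; exact HD | reflexivity]. }
  field; exact HD.
Qed.

Section EndemicEquilibrium.

Variables (k : R) (f : R -> R) (Is Rs : R).
Hypothesis k_gt1 : 1 < k.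
Hypothesis f_Rs_gt0 : 0 < f Rs.
Hypothesis endemic : is_endemic_equilibrium f k Is Rs.

Lemma endemic_R : Rs = (k - 1) * Is.
Proof. destruct endemic as [[_ E2] _]; unfold F2 in E2; lra. Qed.

Lemma endemic_force : f Rs * (1 - Is - Rs) = k.
Proof.
  destruct endemic as [[E1 _] HI]; unfold F1 in E1.
  destruct (Rmult_integral _ _ E1); lra.
Qed.

Lemma endemic_susceptible_gt0 : 0 < 1 - Is - Rs.
Proof.
  pose proof endemic_force as Hforce.
  destruct (Rle_lt_dec (1 - Is - Rs) 0); [nra | assumption].
Qed.

Lemma endemic_R_range : 0 < Rs < 1.
Proof.
  pose proof endemic_R as HR; pose proof endemic_susceptible_gt0 as HS.
  destruct endemic as [_ HI]; split; nra.
Qed.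

Lemma endemic_Derive_g : Derive (g k) Rs = f Rs ^ 2 / (k - 1).
Proof.
  pose proof endemic_R as HR; pose proof endemic_force as Hforce.
  pose proof endemic_susceptible_gt0 as HS.
  assert (HD : (k - 1) / k - Rs = (k - 1) / k * (1 - Is - Rs))
    by (rewrite HR; field; lra).
  assert ((k - 1) / k - Rs <> 0) as HD0.
  { rewrite HD; apply Rgt_not_eq, Rmult_lt_0_compat; [apply Rdiv_lt_0_compat|]; lra. }
  rewrite (Derive_g _ _ HD0).
  rewrite HD; replace (f Rs) with (k / (1 - Is - Rs)) by (field_simplify_eq; lra).
  field; lra.
Qed.

Lemma endemic_jac_trace_lt0 : jac11 f k Is Rs + jac22 k Is Rs < 0.
Proof.
  pose proof endemic_force as Hforce; destruct endemic as [_ HI].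
  rewrite jac11_eq, jac22_eq; nra.
Qed.

Lemma endemic_jac_det :
  ex_derive f Rs ->
  jac11 f k Is Rs * jac22 k Is Rs - jac12 f k Is Rs * jac21 k Is Rs =
  Is * (1 - Is - Rs) * (f Rs ^ 2 - (k - 1) * Derive f Rs).
Proof.
  intros Hf; pose proof endemic_force as Hforce.
  rewrite jac11_eq, (jac12_eq _ _ _ _ Hf), jac21_eq, jac22_eq.
  rewrite <- Hforce; ring.
Qed.

End EndemicEquilibrium.

Theorem theorem3 (k : R) (f : R -> R) (Is Rs : R) :
  1 < k ->
  (forall x, 0 <= x <= 1 -> 0 < f x) ->
  (forall x, 0 < x < 1 -> ex_derive f x) ->
  0 <= Rs <= 1 ->
  is_endemic_equilibrium f k Is Rs ->
  (Derive f Rs < Derive (g k) Rs -> locally_stable f k Is Rs) /\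
  (Derive f Rs > Derive (g k) Rs -> saddle f k Is Rs).
Proof.
  intros Hk Hpos Hder HR Heq.
  assert (HfR : 0 < f Rs) by (apply Hpos; exact HR).
  assert (Hdf : ex_derive f Rs) by (apply Hder, (endemic_R_range _ _ _ _ Hk HfR Heq)).
  pose proof (endemic_jac_det _ _ _ _ Heq Hdf) as Hdet.
  pose proof (endemic_jac_trace_lt0 _ _ _ _ HfR Heq) as Htr.
  assert (HIS : 0 < Is * (1 - Is - Rs)).
  { apply Rmult_lt_0_compat; [apply Heq | apply (endemic_susceptible_gt0 _ _ _ _ Hk HfR Heq)]. }
  assert (Hk1 : 0 < k - 1) by lra.
  rewrite (endemic_Derive_g _ _ _ _ Hk HfR Heq); split.
  - intros Hlt l Hl.
    refine (char2_root_Re_lt0 _ _ _ _ _ Htr _ Hl).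
    rewrite Hdet; apply Rmult_lt_0_compat; [exact HIS |].
    apply (Rmult_lt_compat_l (k - 1)) in Hlt; [| exact Hk1].
    field_simplify in Hlt; lra.
  - intros Hgt.
    destruct (char2_roots_opposite_signs (jac11 f k Is Rs) (jac12 f k Is Rs)
                (jac21 k Is Rs) (jac22 k Is Rs)) as (l1 & l2 & H1 & H2 & Hl1 & Hl2).
    { rewrite Hdet.
      apply (Rmult_lt_compat_l (k - 1)) in Hgt; [| exact Hk1].
      field_simplify in Hgt; [nra | lra]. }
    exists (RtoC l1), (RtoC l2).
    split; [exact (char2_root_RtoC _ _ _ _ _ H1) |].
    split; [exact (char2_root_RtoC _ _ _ _ _ H2) |].
    simpl; repeat split; lra.
Qed.
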